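(* In the setting of the adaptive implicit-explicit iteration described in the context, let $a>0$ and $\eta_{\min}>0$, and suppose the step size satisfies $0<\eta_{\min}\le\eta\le\frac1{\|\bm T\|+2a}$. Then there exists $b>0$ such that for every $k\ge0$, $\left\|\begin{pmatrix}\nabla_{\bm d}L(\bm d_{k+1},\beta_{k+1})\\ \nabla_\beta L(\bm d_{k+1},\beta_{k+1})\end{pmatrix}\right\|_2\le b\,\|\bm d_{k+1}-\bm d_k\|_2.$
   Context: Let $n\ge1$, $r>0$, $\bm g\in\mathbb R^n$ with $\bm g\neq0$, and $\bm H=\bm D+\bm T\in\mathbb R^{n\times n}$, where $\bm D$ is diagonal with nonnegative diagonal entries $D_{i,i}$ and $\bm T$ is symmetric; $\|\bm T\|$ is the spectral norm. Let $f(\bm d)=\bm g^\top\bm d+\frac12\bm d^\top\bm H\bm d$ and $L(\bm d,\beta)=f(\bm d)+\frac{\beta^2}{2}(\|\bm d\|_2^2-r^2)$ for $\bm d\in\mathbb R^n$, $\beta\in\mathbb R$. Adaptive implicit-explicit iteration with step size $\eta>0$: set $\bm d_0=-r\bm g/\|\bm g\|_2$. For $k=0,1,2,\dots$: let $\bm b_k=\bm d_k-\eta(\bm g+\bm T\bm d_k)$ and $\phi_k(\lambda)=\sum_{i=1}^n\big([\bm b_k]_i/(1+\eta(D_{i,i}+\lambda))\big)^2$; set $\lambda_{k+1}=0$ if $\phi_k(0)\le r^2$, and otherwise let $\lambda_{k+1}>0$ be the solution of $\phi_k(\lambda)=r^2$; then $\bm d_{k+1}=(\bm I+\eta(\bm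 D+\lambda_{k+1}\bm I))^{-1}\bm b_k$. Finally $\beta_k=\sqrt{\lambda_k}$. *)

From HB Require Import structures.
From mathcomp Require Import all_boot all_order all_algebra.
From mathcomp Require Import all_classical all_reals.
Set Implicit Arguments. Unset Strict Implicit. Unset Printing Implicit Defensive.
Import Order.TTheory GRing.Theory Num.Theory.
Local Open Scope ring_scope.

Section Defs.
Variable R : realType.

Definition norm2 (n : nat) (v : 'cV[R]_n) : R :=
  Num.sqrt (\sum_(i < n) (v i 0) ^+ 2).

Definition specnorm (n : nat) (T : 'M[R]_n) : R :=
  sup [set norm2 (T *m x) | x in [set x : 'cV[R]_n | norm2 x <= 1]]%classic.

Definition fobj (n : nat) (g : 'cV[R]_n) (H : 'M[R]_n) (d : 'cV[R]_n) : R :=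
  (g^T *m d) 0 0 + 2^-1 * (d^T *m H *m d) 0 0.

Definition Lag (n : nat) (g : 'cV[R]_n) (H : 'M[R]_n) (r : R)
  (d : 'cV[R]_n) (beta : R) : R :=
  fobj g H d + beta ^+ 2 / 2 * (norm2 d ^+ 2 - r ^+ 2).

(* Gradients of L (H symmetric): grad_d L = g + H d + beta^2 d,
   d/dbeta L = beta (||d||^2 - r^2) *)
Definition gradL_d (n : nat) (g : 'cV[R]_n) (H : 'M[R]_n)
  (d : 'cV[R]_n) (beta : R) : 'cV[R]_n :=
  g + H *m d + beta ^+ 2 *: d.

Definition gradL_beta (n : nat) (r : R) (d : 'cV[R]_n) (beta : R) : R :=
  beta * (norm2 d ^+ 2 - r ^+ 2).

Definition gradL_norm (n : nat) (g : 'cV[R]_n) (H : 'M[R]_n) (r : R)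
  (d : 'cV[R]_n) (beta : R) : R :=
  Num.sqrt (norm2 (gradL_d g H d beta) ^+ 2 + (gradL_beta r d beta) ^+ 2).

Definition bvec (n : nat) (g : 'cV[R]_n) (T : 'M[R]_n) (eta : R)
  (d : 'cV[R]_n) : 'cV[R]_n :=
  d - eta *: (g + T *m d).

Definition phi (n : nat) (D : 'M[R]_n) (eta : R) (b : 'cV[R]_n) (lam : R) : R :=
  \sum_(i < n) (b i 0 / (1 + eta * (D i i + lam))) ^+ 2.

(* The adaptive implicit-explicit iteration, stated relationally:
   d : nat -> iterates d_k, lam : nat -> multipliers lambda_k (k >= 1). *)
Definition IMEX_iteration (n : nat) (g : 'cV[R]_n) (D T : 'M[R]_n)
  (r eta : R) (d : nat -> 'cV[R]_n) (lam : nat -> R) : Prop :=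
  d 0%N = - (r / norm2 g) *: g /\
  forall k : nat,
    let b := bvec g T eta (d k) in
    (phi D eta b 0 <= r ^+ 2 -> lam k.+1 = 0) /\
    (r ^+ 2 < phi D eta b 0 -> 0 < lam k.+1 /\ phi D eta b (lam k.+1) = r ^+ 2) /\
    d k.+1 = invmx (1%:M + eta *: (D + (lam k.+1)%:M)) *m b.

End Defs.

From HB Require Import structures.
From mathcomp Require Import all_boot all_order all_algebra.
From mathcomp Require Import all_classical all_reals.
From mathcomp Require Import ring lra.
Import Order.TTheory GRing.Theory Num.Theory.
Local Open Scope ring_scope.

(* The implicit half-step solves (I + eta (D + lambda I)) d_{k+1} = d_k - eta (g + T d_k);
   rearranged, this says that grad_d L(d_{k+1}, beta_{k+1}) = (T - I / eta) (d_{k+1} - d_k),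
   whose norm is at most a constant times ||d_{k+1} - d_k||.  The beta-component of the
   gradient vanishes by complementarity: either lambda_{k+1} = 0, or lambda_{k+1} is chosen
   so that ||d_{k+1}||^2 = phi_k(lambda_{k+1}) = r^2. *)

Section Norm2.
Context {R : realType} {n : nat}.

Lemma norm2_ge0 (v : 'cV[R]_n) : 0 <= norm2 v.
Proof. exact: sqrtr_ge0. Qed.

Lemma norm2_entry (v : 'cV[R]_n) j : `|v j 0| <= norm2 v.
Proof.
rewrite /norm2 -sqrtr_sqr; apply: ler_wsqrtr.
by rewrite (bigD1 j) //= lerDl; apply: sumr_ge0 => i _; apply: sqr_ge0.
Qed.

Lemma norm2_le_sum (v : 'cV[R]_n) : norm2 v <= \sum_i `|v i 0|.
Proof.
have sum_ge0 : 0 <= \sum_i `|v i 0| by apply: sumr_ge0.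
rewrite /norm2 -(ger0_norm sum_ge0) -sqrtr_sqr; apply: ler_wsqrtr.
rewrite expr2 mulr_suml; apply: ler_sum => i _.
rewrite mulr_sumr (bigD1 i) //= -normrM -expr2 ger0_norm ?sqr_ge0 //.
by rewrite lerDl; apply: sumr_ge0 => j _; apply: mulr_ge0.
Qed.

Lemma norm2_mulmx_le (A : 'M[R]_n) (v : 'cV[R]_n) :
  norm2 (A *m v) <= (\sum_i \sum_j `|A i j|) * norm2 v.
Proof.
apply: le_trans (norm2_le_sum _) _; rewrite mulr_suml; apply: ler_sum => i _.
rewrite mxE mulr_suml; apply: le_trans (ler_norm_sum _ _ _) _.
apply: ler_sum => j _; rewrite normrM.
by apply: ler_wpM2l; [apply: normr_ge0 | apply: norm2_entry].
Qed.

End Norm2.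

Section ImplicitStep.
Context {R : realType} {n : nat} {dd : 'rV[R]_n} {eta l : R}.
Hypotheses (dd_ge0 : forall i, 0 <= dd 0 i) (eta_gt0 : 0 < eta) (l_ge0 : 0 <= l).

Let M := 1%:M + eta *: (diag_mx dd + l%:M).
Let c := \row_i (1 + eta * (dd 0 i + l)).

Lemma implicit_mx_diag : M = diag_mx c.
Proof.
apply/matrixP => i j; rewrite !mxE.
by case: (i == j); rewrite ?mulr1n ?mulr0n ?addr0 ?mulr0 ?add0r.
Qed.

Lemma implicit_diag_gt0 i : 0 < c 0 i.
Proof.
by rewrite mxE; have := mulr_ge0 (ltW eta_gt0) (addr_ge0 (dd_ge0 i) l_ge0); lra.
Qed.

Lemma implicit_mx_unit : M \in unitmx.
Proof.
rewrite implicit_mx_diag unitmxE det_diag unitfE.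
by apply/prodf_neq0 => i _; rewrite gt_eqF ?implicit_diag_gt0.
Qed.

Lemma implicit_step_entry (b : 'cV[R]_n) i :
  c 0 i * (invmx M *m b) i 0 = b i 0.
Proof.
have : M *m (invmx M *m b) = b by rewrite mulmxA mulmxV ?implicit_mx_unit ?mul1mx.
by rewrite implicit_mx_diag => /(congr1 (fun v : 'cV_n => v i 0)); rewrite mul_diag_mx mxE.
Qed.

Lemma norm2_implicit_step (b : 'cV[R]_n) :
  norm2 (invmx M *m b) ^+ 2 = phi (diag_mx dd) eta b l.
Proof.
rewrite /norm2 sqr_sqrtr; last by apply: sumr_ge0 => i _; apply: sqr_ge0.
apply: eq_bigr => i _; rewrite [diag_mx dd i i]mxE eqxx mulr1n.
rewrite -(implicit_step_entry b i) mulrAC [c 0 i]mxE mulfV ?mul1r //.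
by have := implicit_diag_gt0 i; rewrite mxE => /gt_eqF ->.
Qed.

Lemma gradL_d_implicit_step (g d d' : 'cV[R]_n) (T : 'M[R]_n) :
  d' = invmx M *m bvec g T eta d ->
  gradL_d g (diag_mx dd + T) d' (Num.sqrt l) = (T - eta^-1%:M) *m (d' - d).
Proof.
move=> d'E; have step i : c 0 i * d' i 0 = bvec g T eta d i 0.
  by rewrite d'E implicit_step_entry.
rewrite /gradL_d sqr_sqrtr // mulmxDl mul_diag_mx mulmxBl mul_scalar_mx mulmxBr.
apply/colP => i; have := step i; rewrite /bvec.
move: (T *m d') (T *m d) => Td' Td; rewrite !mxE => step_i.
have -> : d i 0 = (1 + eta * (dd 0 i + l)) * d' i 0 + eta * (g i 0 + Td i 0).
  by rewrite step_i subrK.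
by field; rewrite gt_eqF.
Qed.

End ImplicitStep.

Lemma IMEX_multiplier_complementary {R : realType} {n : nat} {g : 'cV[R]_n}
    {D T : 'M[R]_n} {r eta : R} {d : nat -> 'cV[R]_n} {lam : nat -> R} :
  IMEX_iteration g D T r eta d lam -> forall k,
  0 <= lam k.+1 /\
  (lam k.+1 = 0 \/ phi D eta (bvec g T eta (d k)) (lam k.+1) = r ^+ 2).
Proof.
case=> _ step k; have [lam0 [lam_pos _]] := step k.
case: (leP (phi D eta (bvec g T eta (d k)) 0) (r ^+ 2)) => [/lam0 -> | /lam_pos [/ltW]].
  by split; [|left].
by split; [|right].
Qed.

Lemma gradL_norm_beta0 (R : realType) (n : nat) (g : 'cV[R]_n) (H : 'M[R]_n)
    (r : R) (d : 'cV[R]_n) (beta : R) :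
  gradL_beta r d beta = 0 -> gradL_norm g H r d beta = norm2 (gradL_d g H d beta).
Proof.
by move=> beta0; rewrite /gradL_norm beta0 expr0n addr0 sqrtr_sqr ger0_norm ?norm2_ge0.
Qed.

Theorem mainTheorem5 (R : realType) (n : nat) (hn : (0 < n)%N)
  (r : R) (hr : 0 < r) (g : 'cV[R]_n) (hg : g != 0)
  (D T : 'M[R]_n) (hD : is_diag_mx D) (hDnn : forall i, 0 <= D i i)
  (hT : T^T = T)
  (a eta_min eta : R) (ha : 0 < a) (heta_min : 0 < eta_min)
  (heta1 : eta_min <= eta) (heta2 : eta <= (specnorm T + 2 * a)^-1)
  (d : nat -> 'cV[R]_n) (lam : nat -> R)
  (hiter : IMEX_iteration g D T r eta d lam) :
  exists b : R, 0 < b /\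
    forall k : nat,
      gradL_norm g (D + T) r (d k.+1) (Num.sqrt (lam k.+1))
        <= b * norm2 (d k.+1 - d k).
Proof.
have eta_gt0 : 0 < eta by apply: lt_le_trans heta1.
case/diag_mxP: hD hiter hDnn => dd -> hiter hDnn.
have dd_ge0 i : 0 <= dd 0 i by have := hDnn i; rewrite mxE eqxx mulr1n.
pose s := \sum_i \sum_j `|(T - eta^-1%:M) i j|.
have s_ge0 : 0 <= s by do 2![apply: sumr_ge0 => ? _].
exists (1 + s); split=> [|k]; first by lra.
have [lam_ge0 complementary] := IMEX_multiplier_complementary hiter k.
have [_ /(_ k) [_ [_ step_eq]]] := hiter.
rewrite gradL_norm_beta0; last first.
  rewrite /gradL_beta step_eq norm2_implicit_step //.
  by case: complementary => [->|->]; rewrite ?sqrtr0 ?mul0r ?subrr ?mulr0.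
rewrite (gradL_d_implicit_step dd_ge0 eta_gt0 lam_ge0 _ _ _ _ step_eq).
apply: le_trans (norm2_mulmx_le _ _) _.
by rewrite mulrDl mul1r lerDr norm2_ge0.
Qed.
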